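(* Let $G$ and $H$ be graphs such that the direct product $G\times H$ is a balanced distance magic graph, and let $\ell$ be a balanced distance magic labeling of $G\times H$ in which $(g,h)$ and $(g',h)$ are twins and also $(g,h_1)$ and $(g,h_2)$ are twins. Let $\widehat\ell$ be obtained from $\ell$ by exchanging the labels of $(g,h_2)$ and $(g',h_1)$, i.e. $\widehat\ell(g,h_2)=\ell(g',h_1)$, $\widehat\ell(g',h_1)=\ell(g,h_2)$, and $\widehat\ell(a,b)=\ell(a,b)$ for all other vertices. Then $\widehat\ell$ is a balanced distance magic labeling of $G\times H$ in which $(g,h_1)$ and $(g',h_1)$ are twins.
   Context: All graphs are finite and simple. For a graph $G$ and vertex $x$, $N(x)=N_G(x)$ is the (open) neighborhood of $x$. A distance magic labeling of a graph $G$ of order $N$ is a bijection $\ell\colon V(G)\to\{1,\dots,N\}$ for which there is a constant $k$ such that the weight $w(x)=\sum_{y\in N(x)}\ell(y)$ equals $k$ for every $x\in V(G)$. A balanced distance magic labeling of a graph $G$ with an even number $N$ of vertices is a distance magic labeling $\ell$ such that for every $w\in V(G)$: whenever $u\in N(w)$ has $\ell(u)=i$, there is $v\in N(w)$ with $\ell(v)=N+1-i$. Under such $\ell$, the vertices labeled $i$ and $N+1-i$ are called twins (with respect to $\ell$). $G$ is a balanced distance magic graph if it has an even number of vertices and admits a balanced distance magic labeling. The direct product $G\times H$ has vertex set $V(G)\times V(H)$, with $(g,h)$ adjacent to $(g',h')$ iff $gg'\in E(G)$ and $hh'\in E(H)$. *)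

From mathcomp Require Import all_boot.
Set Implicit Arguments. Unset Strict Implicit. Unset Printing Implicit Defensive.

Definition simple_graph (T : finType) (e : rel T) : Prop :=
  symmetric e /\ irreflexive e.

Definition direct_prod (T1 T2 : finType) (e1 : rel T1) (e2 : rel T2)
  : rel (T1 * T2) :=
  fun x y => e1 x.1 y.1 && e2 x.2 y.2.

Definition weight (T : finType) (e : rel T) (l : T -> nat) (x : T) : nat :=
  \sum_(y | e x y) l y.

(* l is a bijection V -> {1,...,N}, N = |V|. *)
Definition is_labeling (T : finType) (l : T -> nat) : Prop :=
  injective l /\ (forall x, 1 <= l x <= #|T|).

Definition distance_magic_labeling (T : finType) (e : rel T) (l : T -> nat) : Prop :=
  is_labeling l /\ exists k, forall x, weight e l x = k.

Definition balanced_dm_labeling (T : finType) (e : rel T) (l : T -> nat) : Prop :=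
  ~~ odd #|T| /\ distance_magic_labeling e l /\
  (forall w u, e w u -> exists2 v, e w v & l v = #|T| + 1 - l u).

Definition balanced_dm_graph (T : finType) (e : rel T) : Prop :=
  exists l, balanced_dm_labeling e l.

Definition twins (T : finType) (l : T -> nat) (x y : T) : Prop :=
  l x + l y = #|T| + 1.

Definition swap_labels (T : finType) (l : T -> nat) (a b : T) : T -> nat :=
  fun x => if x == a then l b else if x == b then l a else l x.

From mathcomp Require Import all_boot fingroup perm.
Set Implicit Arguments. Unset Strict Implicit.

(* In a balanced distance magic labeling, twins are interchangeable: they are
   distinct vertices with the same open neighbourhood.  Consequently, if two
   vertices a and b of a graph have the same neighbourhood, exchanging their
   labels (i.e. composing the labeling with the transposition (a b)) preserves
   injectivity, the range, every weight and the balance property, so it yields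
   again a balanced distance magic labeling.
   In G x H, the twins (g,h),(g',h) force N_G(g) = N_G(g') and the twins
   (g,h1),(g,h2) force N_H(h1) = N_H(h2), as soon as (g,h) has a neighbour;
   hence (g,h2) and (g',h1) have the same neighbourhood.  If (g,h) has no
   neighbour, the magic constant is 0 and the product has no edges at all.
   So the exchange of their labels is balanced, and it makes (g,h1) and
   (g',h1) twins because (g,h1) and (g,h2) were twins before. *)

(* Twins are distinct, since the number of vertices is even. *)
Lemma twins_neq (T : finType) (e : rel T) (l : T -> nat) (u v : T) :
  balanced_dm_labeling e l -> twins l u v -> u != v.
Proof.
move=> [Heven _]; rewrite /twins => Huv; apply/eqP => Euv; subst v.
by have := congr1 odd Huv; rewrite addnn odd_double addn1 /= Heven.
Qed.

(* A neighbour of a vertex is always accompanied by its twin, which is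
   unique since the labeling is injective. *)
Lemma twin_nbr (T : finType) (e : rel T) (l : T -> nat) (u v w : T) :
  balanced_dm_labeling e l -> twins l u v -> e w u -> e w v.
Proof.
move=> [_ [[[linj _] _] Hbal]] Huv ewu.
have [v' ewv' lv'] := Hbal w u ewu.
suff -> : v = v' by [].
by apply: linj; rewrite lv' -Huv addKn.
Qed.

Lemma twins_same_nbr (T : finType) (e : rel T) (l : T -> nat) (u v w : T) :
  balanced_dm_labeling e l -> twins l u v -> e w u = e w v.
Proof.
move=> Hl Huv; apply/idP/idP; first exact: (twin_nbr Hl Huv).
by apply: (twin_nbr Hl); rewrite /twins addnC.
Qed.

(* If one vertex of a distance magic graph is isolated, the magic constant
   is 0, and since all labels are positive there are no edges at all. *)
Lemma isolated_edgeless (T : finType) (e : rel T) (l : T -> nat) (x : T) :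
  distance_magic_labeling e l -> (forall y, e x y = false) ->
  forall u v, e u v = false.
Proof.
move=> [[_ lrange] [k Hk]] Hx u v; apply/negP => euv.
have k0 : k = 0 by rewrite -(Hk x) /weight big_pred0.
have := Hk u; rewrite k0 /weight (bigD1 v) //=.
by have := lrange v; case: (l v).
Qed.

(* Relabeling along a permutation of the vertices that preserves
   neighbourhoods keeps a labeling balanced distance magic: the weights are
   reindexed sums, and twins are transported by the permutation. *)
Lemma balanced_perm_nbr (T : finType) (e : rel T) (l l' : T -> nat)
    (s : {perm T}) :
  (forall w y, e w (s y) = e w y) -> l' =1 l \o s ->
  balanced_dm_labeling e l -> balanced_dm_labeling e l'.
Proof.
move=> es l'E [Heven [[[linj lrange] [k Hk]] Hbal]].
have esV w y : e w ((s^-1)%g y) = e w y by rewrite -{2}(permKV s y) es.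
split=> //; split; first split.
- split=> [x y|x]; first by rewrite !l'E => /linj /perm_inj.
  by rewrite l'E; apply: lrange.
- exists k => x; rewrite -(Hk x) /weight [RHS](reindex_inj (@perm_inj _ s)).
  by apply: eq_big => y; rewrite ?es ?l'E.
- move=> w u ewu.
  have ewsu : e w (s u) by rewrite es.
  have [v ewv lv] := Hbal w (s u) ewsu.
  exists ((s^-1)%g v); first by rewrite esV.
  by rewrite !l'E /= permKV lv.
Qed.

Lemma swap_labelsE (T : finType) (l : T -> nat) (a b : T) :
  swap_labels l a b =1 l \o tperm a b.
Proof.
move=> y; rewrite /swap_labels /=.
case: (eqVneq y a) => [->|ya]; first by rewrite tpermL.
case: (eqVneq y b) => [->|yb]; first by rewrite tpermR.
by rewrite tpermD // eq_sym.
Qed.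

Lemma balanced_swap (T : finType) (e : rel T) (l : T -> nat) (a b : T) :
  (forall w, e w a = e w b) ->
  balanced_dm_labeling e l -> balanced_dm_labeling e (swap_labels l a b).
Proof.
move=> Eab; apply: balanced_perm_nbr (swap_labelsE l a b) => w y.
case: (eqVneq y a) => [->|ya]; first by rewrite tpermL Eab.
case: (eqVneq y b) => [->|yb]; first by rewrite tpermR Eab.
by rewrite tpermD // eq_sym.
Qed.

Section DirectProduct.

Variables (TG TH : finType) (eG : rel TG) (eH : rel TH).
Hypotheses (HG : simple_graph eG) (HH : simple_graph eH).
Let e := direct_prod eG eH.

Lemma direct_prod_sym : symmetric e.
Proof. by move=> x y; rewrite /e /direct_prod (proj1 HG x.1) (proj1 HH x.2). Qed.

Lemma prod_twins_same_nbr (l : TG * TH -> nat) (g g' : TG) (h h1 h2 : TH) :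
  balanced_dm_labeling e l ->
  twins l (g, h) (g', h) -> twins l (g, h1) (g, h2) ->
  forall w, e w (g, h2) = e w (g', h1).
Proof.
move=> Hl Ht1 Ht2.
case: (pickP (e (g, h))) => [[x0 y0] Enbr | Hisol]; last first.
  by move=> w; rewrite !(isolated_edgeless (proj1 (proj2 Hl)) Hisol).
rewrite direct_prod_sym /e /direct_prod /= in Enbr; case/andP: Enbr => ex0 ey0.
have EG x : eG x g = eG x g'.
  by have := twins_same_nbr (x, y0) Hl Ht1; rewrite /e /direct_prod /= ey0 !andbT.
have EH y : eH y h1 = eH y h2.
  by have := twins_same_nbr (x0, y) Hl Ht2; rewrite /e /direct_prod /= ex0.
by move=> [x y]; rewrite /e /direct_prod /= EG EH.
Qed.

End DirectProduct.

Theorem lemma2 (TG TH : finType) (eG : rel TG) (eH : rel TH)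
  (HG : simple_graph eG) (HH : simple_graph eH)
  (Hbal : balanced_dm_graph (direct_prod eG eH))
  (l : TG * TH -> nat) (Hl : balanced_dm_labeling (direct_prod eG eH) l)
  (g g' : TG) (h h1 h2 : TH)
  (Ht1 : twins l (g, h) (g', h)) (Ht2 : twins l (g, h1) (g, h2)) :
  let lhat := swap_labels l (g, h2) (g', h1) in
  balanced_dm_labeling (direct_prod eG eH) lhat /\ twins lhat (g, h1) (g', h1).
Proof.
move=> lhat; split.
  exact/balanced_swap/Hl/(prod_twins_same_nbr HG HH Hl Ht1 Ht2).
have gg' : g != g' by apply: contraNneq (twins_neq Hl Ht1) => ->.
have h12 : h1 != h2 by apply: contraNneq (twins_neq Hl Ht2) => ->.
rewrite /twins /lhat /swap_labels eqxx.
have -> : ((g, h1) == (g, h2)) = false by rewrite xpair_eqE eqxx (negbTE h12).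
have -> : ((g, h1) == (g', h1)) = false by rewrite xpair_eqE (negbTE gg').
by have -> : ((g', h1) == (g, h2)) = false by rewrite xpair_eqE eq_sym (negbTE gg').
Qed.
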